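(* Let $G$ be an abelian group of order $9p^{4s}$, where $p\ge 5$ is a prime and $s$ is a positive integer. Then there does not exist a $(9p^{4s},\ r(3p^{2s}+1),\ -3p^{2s}+r^2+3r,\ r^2+r)$-partial difference set in $G$ with $r=(3p^{2s}-5)/2$.
   Context: For a finite abelian group $G$ of order $v$, a subset $D\subseteq G$ of size $k$ is a $(v,k,\lambda,\mu)$-partial difference set (PDS) if the expressions $gh^{-1}$ with $g,h\in D$, $g\ne h$, represent each non-identity element of $D$ exactly $\lambda$ times and each non-identity element of $G\setminus D$ exactly $\mu$ times. *)

From mathcomp Require Import all_boot all_order all_algebra all_fingroup.
From mathcomp Require Import ssrint.
Set Implicit Arguments. Unset Strict Implicit. Unset Printing Implicit Defensive.
Import GRing.Theory Num.Theory.
Local Open Scope ring_scope.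

Definition pds_count (gT : finGroupType) (D : {set gT}) (x : gT) : nat :=
  #|[set gh : gT * gT | [&& gh.1 \in D, gh.2 \in D, gh.1 != gh.2
                           & (gh.1 * gh.2^-1)%g == x]]|.

Definition is_pds (gT : finGroupType) (G D : {set gT}) (v k : nat)
    (lam mu : int) : Prop :=
  [/\ D \subset G, #|G| = v, #|D| = k,
      (forall x, x \in D -> x != 1%g -> (pds_count D x)%:Z = lam) &
      (forall x, x \in G :\: D -> x != 1%g -> (pds_count D x)%:Z = mu)].

From mathcomp Require Import all_boot all_order all_algebra all_fingroup.
From mathcomp Require Import all_solvable all_field all_character.
From mathcomp Require Import zify ring lra.
Set Implicit Arguments. Unset Strict Implicit. Unset Printing Implicit Defensive.
Import GRing.Theory Num.Theory.
Local Open Scope ring_scope.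

(* Write n = p^(2s), r = (3n - 5)/2 and G = A * B with #|A| = 9, #|B| = n^2.
   The trivial character rules out 1 \in D, and the PDS equations force every
   nontrivial linear character of G to take the value r or r - 3n on D.  Fix a
   nontrivial character of B and look at its 9 extensions to G: their values on
   D add up to 9 times its value on D :&: B, a rational algebraic integer, so
   the number of extensions with value r - 3n is 3J and the value on D :&: B is
   r - nJ.  A Galois automorphism conjugating the values of characters of A
   and fixing those of B pairs these extensions, fixing only the one trivial on
   A; hence J <> 1 unless that extension has value r - 3n, which gives
   2J <= e + J^2.  Summing over the characters of B the values on D of the
   characters trivial on A, the values on D :&: B and their squared norms
   yields three equations that contradict these inequalities. *)

Lemma pds_count1 (gT : finGroupType) (D : {set gT}) : pds_count D 1%g = 0%N.
Proof.
apply/eqP; rewrite cards_eq0; apply/eqP/setP => [[g h]]; rewrite !inE /=.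
by rewrite -eq_mulgV1; case: eqP => [->|_]; rewrite ?eqxx ?andbF.
Qed.

Lemma sum_pds_diff (gT : finGroupType) (G : {group gT}) (D : {set gT})
    (F : gT -> algC) :
  D \subset G ->
  \sum_(g in D) \sum_(h in D) F (g * h^-1)%g =
  #|D|%:R * F 1%g + \sum_(x in G) (pds_count D x)%:R * F x.
Proof.
move=> sDG.
rewrite (eq_bigr (fun g => F 1%g + \sum_(h in D | h != g) F (g * h^-1)%g));
  last by move=> g Dg; rewrite (bigD1 g) //= mulgV.
rewrite big_split /= sumr_const mulr_natl pair_big_dep /=; congr (_ + _).
rewrite (partition_big (fun u => (u.1 * u.2^-1)%g) (mem G)) /=; last first.
  by move=> [g h] /= /andP[Dg /andP[Dh _]]; rewrite groupM ?groupV ?(subsetP sDG).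
apply: eq_bigr => x Gx; rewrite (eq_bigr (fun _ => F x)); last first.
  by move=> u /andP[_ /eqP->].
rewrite sumr_const mulr_natl; congr (_ *+ _); apply: eq_card => [[g h]].
by rewrite !inE unfold_in /= -!andbA eq_sym.
Qed.

Lemma pds_char_norm (gT : finGroupType) (G : {group gT}) (D : {set gT})
    (lam mu : int) (f : gT -> algC) :
  D \subset G ->
  (forall x, x \in D -> x != 1%g -> (pds_count D x)%:Z = lam) ->
  (forall x, x \in G :\: D -> x != 1%g -> (pds_count D x)%:Z = mu) ->
  f 1%g = 1 -> {in G &, {morph f : x y / (x * y)%g >-> x * y}} ->
  {in G, forall x, f x^-1%g = (f x)^*} ->
  let s := \sum_(g in D) f g in
  s * s^* = #|D|%:R + lam%:~R * (s - (1%g \in D)%:R)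
            + mu%:~R * (\sum_(x in G) f x - s - (1%g \notin D)%:R).
Proof.
move=> sDG Dlam Dmu f1 fM fV s.
have GD x : x \in D -> x \in G by apply: (subsetP sDG).
have -> : s * s^* = \sum_(g in D) \sum_(h in D) f (g * h^-1)%g.
  rewrite rmorph_sum mulr_suml; apply: eq_bigr => g Dg.
  by rewrite mulr_sumr; apply: eq_bigr => h Dh; rewrite fM ?groupV ?GD // fV ?GD.
rewrite (sum_pds_diff _ sDG) f1 mulr1 -addrA; congr (_ + _).
pose c x : algC := if x \in D then lam%:~R else mu%:~R.
have -> : \sum_(x in G) (pds_count D x)%:R * f x =
          \sum_(x in G) c x * f x - c 1%g.
  rewrite [in RHS](bigD1 1%g) //= f1 mulr1 addrAC subrr add0r.
  rewrite (bigD1 1%g) //= pds_count1 mul0r add0r.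
  apply: eq_bigr => x /andP[Gx x1]; congr (_ * _); rewrite /c.
  case: ifP => Dx; first by rewrite -(Dlam x Dx x1) pmulrn.
  by rewrite -(Dmu x _ x1) ?pmulrn // inE Dx.
have sumGD : \sum_(x in G | x \in D) f x = s.
  by apply: eq_bigl => x; rewrite andb_idl // => /GD.
rewrite (bigID (mem D)) /= [\sum_(x in G) f x](bigID (mem D)) /= sumGD.
have -> : \sum_(x in G | x \in D) c x * f x = lam%:~R * s.
  rewrite mulr_sumr; apply: eq_big => [x|x /andP[_ Dx]]; last by rewrite /c Dx.
  by rewrite andb_idl // => /GD.
have -> : \sum_(x in G | x \notin D) c x * f x =
          mu%:~R * \sum_(x in G | x \notin D) f x.
  by rewrite mulr_sumr; apply: eq_bigr => x /andP[_ /negbTE nDx]; rewrite /c nDx.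
by rewrite /c; case: (1%g \in D) => /=; ring.
Qed.

Lemma conj_quadratic_root (s t u : algC) :
  t^* = t -> u^* = u -> t + u != 0 -> s * s^* = (t + u) * s - t * u ->
  s = t \/ s = u.
Proof.
move=> tR uR tu0 sE.
have sR : s^* = s.
  have := congr1 (fun z => z^*) sE; rewrite !(rmorphM, rmorphB, rmorphD) /= tR uR.
  rewrite conjCK mulrC sE => /eqP; rewrite -subr_eq0 => /eqP sE'.
  have /eqP : (t + u) * (s - s^*) = 0 by rewrite -sE'; ring.
  by rewrite mulf_eq0 (negbTE tu0) subr_eq0 => /eqP.
have : (s - t) * (s - u) = s * s^* - ((t + u) * s - t * u) by rewrite sR; ring.
rewrite sE subrr => /eqP; rewrite mulf_eq0 !subr_eq0.
by case/orP=> /eqP; [left|right].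
Qed.

Lemma card_nonfixed_even (I : finType) (c : I -> I) (P : pred I) :
  involutive c -> (forall i, P (c i) = P i) ->
  ~~ odd #|[set i | P i & c i != i]|.
Proof.
move=> cK Pc; set S := [set i | _ & _].
(* c maps the points of S below their image (in rank) onto those above it. *)
set lo := [set i | (enum_rank i < enum_rank (c i))%N].
have loC : c @: (S :&: lo) = S :\: lo.
  rewrite (can2_imset_pre _ cK cK); apply/setP => i; rewrite !inE Pc cK.
  rewrite (can2_eq cK cK) eq_sym; case: eqP => //= ci_i; rewrite ?andbF //.
  by case: ltngtP; rewrite ?andbF ?andbT // => /val_inj/enum_rank_inj.
by rewrite -(cardsID lo S) -loC card_imset ?addnn ?odd_double //; apply: inv_inj.
Qed.

Section AbelianIrr.
Variables (gT : finGroupType) (H : {group gT}).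
Hypothesis cH : abelian H.

Lemma irr_lin_abelian i : 'chi[H]_i \is a linear_char.
Proof. exact: (char_abelianP H cH). Qed.

Lemma irr1_abelian i : 'chi[H]_i 1%g = 1.
Proof. exact: lin_char1 (irr_lin_abelian i). Qed.

Lemma irrX_abelian i x q : x \in H -> (x ^+ q)%g = 1%g -> 'chi[H]_i x ^+ q = 1.
Proof.
by move=> Hx xq; rewrite -(lin_charX (irr_lin_abelian i)) // xq irr1_abelian.
Qed.

Lemma sum_irr_abelian x :
  x \in H -> \sum_i 'chi[H]_i x = #|H|%:R *+ (x == 1%g).
Proof.
move=> Hx; rewrite -cfRegE cfReg_sum sum_cfunE.
by apply: eq_bigr => i _; rewrite cfunE irr1_abelian mul1r.
Qed.

Lemma sum_irr_conj_abelian x y : x \in H -> y \in H ->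
  \sum_i 'chi[H]_i x * ('chi_i y)^* = #|H|%:R *+ (x == y).
Proof.
move=> Hx Hy; rewrite eq_mulgV1 -sum_irr_abelian ?groupM ?groupV //.
apply: eq_bigr => i _; have chi_lin := irr_lin_abelian i.
by rewrite lin_charM ?lin_charV_conj ?groupV.
Qed.

Lemma conjC_Iirr_fixed_abelian (i : Iirr H) :
  odd #|H| -> conjC_Iirr i = i -> i = 0.
Proof.
move=> oddH ci; apply/irr_inj/cfun_inP => x Hx; rewrite irr0 cfun1E Hx.
have chi_lin := irr_lin_abelian i.
have z2 : 'chi_i x ^+ 2 = 1.
  have zR : ('chi_i x)^* = 'chi_i x by rewrite -[in RHS]ci conjC_IirrE cfunE.
  by rewrite expr2 -{2}zR -normCK normC_lin_char // expr1n.
rewrite -(irrX_abelian i Hx (expg_cardG Hx)) -(odd_double_half #|H|) oddH.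
by rewrite -muln2 mulnC exprS exprM z2 expr1n mulr1.
Qed.

End AbelianIrr.

Lemma irr_neq0_nontrivial (gT : finGroupType) (H : {group gT}) (i : Iirr H) :
  i != 0 -> exists2 x, x \in H & 'chi_i x != 1.
Proof.
move=> i0; apply/exists_inP; apply: contraR i0 => /exists_inPn chi1.
apply/eqP/irr_inj/cfun_inP => x Hx.
by rewrite irr0 cfun1E Hx; apply/eqP/negPn/chi1.
Qed.

Lemma expg_eq_mod (gT : finGroupType) (x : gT) q e c :
  (x ^+ q)%g = 1%g -> e = c %[mod q] -> (x ^+ e)%g = (x ^+ c)%g.
Proof. by move=> xq ec; rewrite -(expg_mod e xq) -(expg_mod c xq) ec. Qed.

Definition Ldiv_group (gT : finGroupType) (G : {group gT}) (cG : abelian G) q :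
  {group gT} := Group (group_Ldiv q cG).

Section CoprimeSplit.
Variables (gT : finGroupType) (G : {group gT}) (a b : nat).
Hypotheses (cG : abelian G) (oG : #|G| = (a * b)%N) (coab : coprime a b).

Local Notation A := (Ldiv_group cG a).
Local Notation B := (Ldiv_group cG b).
(* x ^+ ea and x ^+ eb are the components of x in G = A * B. *)
Local Notation ea := (chinese a b 1 0).
Local Notation eb := (chinese a b 0 1).

Lemma mem_Ldiv_group q x : (x \in Ldiv_group cG q) = (x \in G) && (x ^+ q == 1)%g.
Proof. by rewrite !inE. Qed.

Lemma Ldiv_group_sub q : Ldiv_group cG q \subset G.
Proof. by apply/subsetP => x; rewrite mem_Ldiv_group => /andP[]. Qed.

Lemma expg_mem_Ldiv_group q x e :
  x \in G -> (a * b %| e * q)%N -> (x ^+ e)%g \in Ldiv_group cG q.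
Proof.
move=> Gx dv; rewrite mem_Ldiv_group groupX //= -expgM -order_dvdn.
by apply: dvdn_trans (order_dvdG Gx) _; rewrite oG.
Qed.

Lemma expgMn_abelian e x y :
  x \in G -> y \in G -> ((x * y) ^+ e)%g = (x ^+ e * y ^+ e)%g.
Proof. by move=> Gx Gy; rewrite expgMn //; apply: (centsP cG). Qed.

Lemma projA_mem x : x \in G -> (x ^+ ea)%g \in A.
Proof.
move=> Gx; apply: expg_mem_Ldiv_group; rewrite // mulnC dvdn_mul //.
by apply/eqP; rewrite (chinese_modr coab) mod0n.
Qed.

Lemma projB_mem x : x \in G -> (x ^+ eb)%g \in B.
Proof.
move=> Gx; apply: expg_mem_Ldiv_group; rewrite // dvdn_mul //.
by apply/eqP; rewrite (chinese_modl coab) mod0n.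
Qed.

Lemma mulg_proj x : x \in G -> (x ^+ ea * x ^+ eb)%g = x.
Proof.
move=> Gx; rewrite -expgD -[RHS]expg1; apply: (@expg_eq_mod _ x (a * b)).
  by rewrite -oG expg_cardG.
apply/eqP; rewrite (chinese_remainder coab); apply/andP; split; apply/eqP.
  by rewrite -modnDm !(chinese_modl coab) modnDm.
by rewrite -modnDm !(chinese_modr coab) modnDm.
Qed.

Lemma projA_A y : y \in A -> (y ^+ ea)%g = y.
Proof.
by rewrite mem_Ldiv_group => /andP[_ /eqP ya]; rewrite -[RHS]expg1;
  apply: (expg_eq_mod ya); rewrite (chinese_modl coab).
Qed.

Lemma projA_B y : y \in B -> (y ^+ ea)%g = 1%g.
Proof.
by rewrite mem_Ldiv_group => /andP[_ /eqP yb]; rewrite -(expg0 y);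
  apply: (expg_eq_mod yb); rewrite (chinese_modr coab).
Qed.

Lemma projB_A y : y \in A -> (y ^+ eb)%g = 1%g.
Proof.
by rewrite mem_Ldiv_group => /andP[_ /eqP ya]; rewrite -(expg0 y);
  apply: (expg_eq_mod ya); rewrite (chinese_modl coab).
Qed.

Lemma projB_B y : y \in B -> (y ^+ eb)%g = y.
Proof.
by rewrite mem_Ldiv_group => /andP[_ /eqP yb]; rewrite -[RHS]expg1;
  apply: (expg_eq_mod yb); rewrite (chinese_modr coab).
Qed.

Lemma projA_eq1 x : x \in G -> ((x ^+ ea)%g == 1%g) = (x \in B).
Proof.
move=> Gx; apply/eqP/idP => [xa1|/projA_B //].
by rewrite -(mulg_proj Gx) xa1 mul1g projB_mem.
Qed.

Lemma projB_eq1 x : x \in G -> ((x ^+ eb)%g == 1%g) = (x \in A).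
Proof.
move=> Gx; apply/eqP/idP => [xb1|/projB_A //].
by rewrite -(mulg_proj Gx) xb1 mulg1 projA_mem.
Qed.

Lemma card_Ldiv_mul : (#|A| * #|B|)%N = #|G|.
Proof.
have sA := subsetP (Ldiv_group_sub a); have sB := subsetP (Ldiv_group_sub b).
have GAB : G :=: [set u.1 * u.2 | u in setX A B]%g.
  apply/setP => x; apply/idP/imsetP => [Gx|[[y z]]].
    exists (x ^+ ea, x ^+ eb)%g; last by rewrite mulg_proj.
    by rewrite in_setX projA_mem ?projB_mem.
  by rewrite in_setX => /andP[/sA Gy /sB Gz] ->; rewrite groupM.
rewrite -cardsX GAB card_in_imset // => [[y z] [y' z']].
rewrite !in_setX /= => /andP[Ay Bz] /andP[Ay' Bz'] yz.
have := congr1 (fun w => w ^+ ea)%g yz; have := congr1 (fun w => w ^+ eb)%g yz.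
have [Gy Gz Gy' Gz'] := And4 (sA _ Ay) (sB _ Bz) (sA _ Ay') (sB _ Bz').
rewrite /= !expgMn_abelian // (projA_A Ay) (projA_A Ay') (projA_B Bz).
rewrite (projA_B Bz') (projB_A Ay) (projB_A Ay') (projB_B Bz) (projB_B Bz').
by rewrite !mulg1 !mul1g => -> ->.
Qed.

Lemma coprime_card_Ldiv_group q c :
  (0 < q)%N -> (0 < c)%N -> coprime q c -> coprime #|Ldiv_group cG q| c.
Proof.
move=> q_gt0 c_gt0 coqc.
have piL : (\pi(q).-group (Ldiv_group cG q))%g.
  rewrite -pnat_exponent; apply: pnat_dvd (pnat_pi q_gt0).
  by apply/exponentP => x; rewrite mem_Ldiv_group => /andP[_ /eqP].
by apply: pnat_coprime piL _; rewrite -coprime_pi'.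
Qed.

Lemma card_Ldiv_groupl : #|A| = a.
Proof.
have [a_gt0 b_gt0] : (0 < a)%N /\ (0 < b)%N.
  by apply/andP; rewrite -muln_gt0 -oG cardG_gt0.
have dvdA : (#|A| %| a)%N.
  rewrite -(Gauss_dvdl _ (coprime_card_Ldiv_group a_gt0 b_gt0 coab)) -oG.
  exact/cardSg/Ldiv_group_sub.
have dvdB : (#|B| %| b)%N.
  have coBa : coprime #|B| a.
    by apply: coprime_card_Ldiv_group; rewrite // coprime_sym.
  by rewrite -(Gauss_dvdr _ coBa) -oG; exact/cardSg/Ldiv_group_sub.
have := card_Ldiv_mul; rewrite oG.
have := dvdn_leq a_gt0 dvdA; have := dvdn_leq b_gt0 dvdB; nia.
Qed.

Lemma card_Ldiv_groupr : #|B| = b.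
Proof.
apply/eqP; have := card_Ldiv_mul; rewrite card_Ldiv_groupl oG => /eqP.
rewrite eqn_pmul2l // lt0n; apply: contraTneq (cardG_gt0 G) => a0.
by rewrite oG a0.
Qed.

Let cA : abelian A := abelianS (Ldiv_group_sub a) cG.
Let cB : abelian B := abelianS (Ldiv_group_sub b) cG.

Definition split_char (i : Iirr A) (j : Iirr B) (g : gT) : algC :=
  'chi_i (g ^+ ea)%g * 'chi_j (g ^+ eb)%g.

Local Notation phi := split_char.

Lemma split_char1 i j : phi i j 1%g = 1.
Proof. by rewrite /phi !expg1n !irr1_abelian ?mulr1. Qed.

Lemma split_charM i j : {in G &, {morph phi i j : x y / (x * y)%g >-> x * y}}.
Proof.
move=> x y Gx Gy; rewrite /phi !expgMn_abelian // mulrACA.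
by rewrite !lin_charM ?projA_mem ?projB_mem //; apply: irr_lin_abelian.
Qed.

Lemma split_charV i j : {in G, forall x, phi i j x^-1%g = (phi i j x)^*}.
Proof.
move=> x Gx; rewrite /phi !expgVn rmorphM.
by rewrite !lin_charV_conj ?projA_mem ?projB_mem //; apply: irr_lin_abelian.
Qed.

Lemma split_charA i j y : y \in A -> phi i j y = 'chi_i y.
Proof. by move=> Ay; rewrite /phi projA_A // projB_A // irr1_abelian ?mulr1. Qed.

Lemma split_charB i j y : y \in B -> phi i j y = 'chi_j y.
Proof. by move=> By; rewrite /phi projA_B // projB_B // irr1_abelian ?mul1r. Qed.

Lemma split_char00 g : g \in G -> phi 0 0 g = 1.
Proof.
by move=> Gg; rewrite /phi !irr0 !cfun1E projA_mem ?projB_mem // mulr1.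
Qed.

Lemma sum_split_char_eq0 i j :
  (i != 0) || (j != 0) -> \sum_(x in G) phi i j x = 0.
Proof.
move=> nz.
have [y Gy phi_y] : exists2 y, y \in G & phi i j y != 1.
  case/orP: nz => [/irr_neq0_nontrivial[y Ay]|/irr_neq0_nontrivial[y By]].
    by exists y; rewrite ?split_charA ?(subsetP (Ldiv_group_sub a)).
  by exists y; rewrite ?split_charB ?(subsetP (Ldiv_group_sub b)).
have shift : \sum_(x in G) phi i j x = phi i j y * \sum_(x in G) phi i j x.
  rewrite mulr_sumr (reindex_inj (mulgI y)) /=.
  apply: eq_big => [x|x Gyx]; first by rewrite groupMl.
  by rewrite split_charM // -(groupMl _ Gy).
have : (1 - phi i j y) * \sum_(x in G) phi i j x = 0.
  by rewrite mulrBl mul1r -shift subrr.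
by move/eqP; rewrite mulf_eq0 subr_eq0 eq_sym (negbTE phi_y) => /eqP.
Qed.

Lemma sum_split_charA j g :
  g \in G -> \sum_i phi i j g = a%:R *+ (g \in B) * 'chi_j g.
Proof.
move=> Gg; rewrite -mulr_suml sum_irr_abelian ?projA_mem // card_Ldiv_groupl.
rewrite projA_eq1 //; case: (boolP (g \in B)) => [Bg|_]; first by rewrite projB_B.
by rewrite /= mulr0n !mul0r.
Qed.

Lemma sum_split_charB g :
  g \in G -> \sum_j phi 0 j g = b%:R *+ (g \in A).
Proof.
move=> Gg; rewrite -mulr_sumr sum_irr_abelian ?projB_mem // card_Ldiv_groupr.
by rewrite irr0 cfun1E projA_mem // mul1r projB_eq1.
Qed.

Lemma split_char_aut :
  {u : {rmorphism algC -> algC} |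
    forall i j g, g \in G -> u (phi i j g) = phi (conjC_Iirr i) j g}.
Proof.
have a_gt0 : (0 < a)%N by move: (cardG_gt0 G); rewrite oG muln_gt0 => /andP[].
(* u raises a-th roots of unity to the power -1 and fixes b-th ones. *)
pose t := chinese a b a.-1 1.
have co_t : coprime t (a * b).
  rewrite coprimeMr -coprime_modl (chinese_modl coab) coprime_modl coprimePn //=.
  by rewrite -coprime_modl (chinese_modr coab) coprime_modl coprime1n.
have [u uE] := Qn_aut_exists co_t; exists u => i j g Gg.
have [Ax By] := (projA_mem Gg, projB_mem Gg).
move: Ax By; rewrite /phi; set x := (g ^+ ea)%g; set y := (g ^+ eb)%g => Ax By.
have [xa yb] : (x ^+ a = 1 /\ y ^+ b = 1)%g.
  by move: Ax By; rewrite !mem_Ldiv_group => /andP[_ /eqP] ? /andP[_ /eqP].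
have chi_xa : 'chi_i x ^+ a = 1 by apply: irrX_abelian.
have chi_yb : 'chi_j y ^+ b = 1 by apply: irrX_abelian.
rewrite rmorphM uE; last by rewrite exprM chi_xa expr1n.
rewrite uE; last by rewrite mulnC exprM chi_yb expr1n.
rewrite -(expr_mod t chi_xa) -(expr_mod t chi_yb) /t (chinese_modl coab).
rewrite (chinese_modr coab) !expr_mod // expr1; congr (_ * _).
have chi_lin := irr_lin_abelian cA i.
rewrite conjC_IirrE cfunE.
transitivity ('chi_i x^-1%g); last exact: lin_charV_conj.
rewrite -(lin_charX chi_lin) //; congr ('chi_i _).
by apply/eqP; rewrite eq_sym eq_invg_mul -expgS prednK // xa.
Qed.

End CoprimeSplit.

Lemma moment_equations_infeasible (n r c dA dB E S1 S2 : nat) :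
  (2 * r + 5 = 3 * n)%N -> (c + 1 = n ^ 2)%N ->
  (r * (3 * n + 1) + c * r = n ^ 2 * dA + 3 * n * E)%N ->
  (dB + c * r = n * S1)%N ->
  (dB ^ 2 + c * r ^ 2 + n ^ 2 * S2 = n ^ 2 * dB + 2 * r * n * S1)%N ->
  (2 * S1 <= E + S2)%N -> False.
Proof.
move=> hnr hc eqA eqB eqC hS.
have [v nE rE] : exists2 v, n = (2 * v + 3)%N & r = (3 * v + 2)%N.
  by exists ((n - 3) %/ 2)%N; lia.
subst n r; rewrite !expnS !expn0 !muln1 in hc eqA eqB eqC.
move: hc eqA eqB eqC => /(congr1 Posz) hc /(congr1 Posz) eqA /(congr1 Posz) eqB
  /(congr1 Posz) eqC; rewrite !(PoszD, PoszM) in hc eqA eqB eqC.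
have cE : c%:Z = (2 * v%:Z + 3) * (2 * v%:Z + 3) - 1 by rewrite -hc; ring.
rewrite cE {hc cE} in eqA eqB eqC.
pose N : int := 2 * v%:Z + 3; pose R : int := 3 * v%:Z + 2.
pose C : int := N ^+ 2 - 1.
have eA : 3 * N * E%:Z = R * (3 * N + 1) + C * R - N ^+ 2 * dA%:Z.
  by rewrite /C /N /R; move: eqA; rewrite !expr2; lra.
have eB : N * S1%:Z = dB%:Z + C * R.
  by rewrite /C /N /R; move: eqB; rewrite !expr2; lra.
have eC : N ^+ 2 * S2%:Z =
    N ^+ 2 * dB%:Z + 2 * R * (N * S1%:Z) - dB%:Z ^+ 2 - C * R ^+ 2.
  by rewrite /C /N /R; move: eqC; rewrite !expr2; lra.
(* Eliminating E, S2 and S1 leaves a negative quantity. *)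
pose X : int := 2 * dB%:Z - (N ^+ 2 + N - 5).
have key : 12 * N ^+ 2 * (E%:Z + S2%:Z - 2 * S1%:Z) =
    - 3 * X ^+ 2 - (128 * v%:Z ^+ 3 + 468 * v%:Z ^+ 2 + 540 * v%:Z + 189)
    - 4 * N ^+ 3 * dA%:Z.
  have -> : 12 * N ^+ 2 * (E%:Z + S2%:Z - 2 * S1%:Z) =
      4 * N * (3 * N * E%:Z) + 12 * (N ^+ 2 * S2%:Z) - 24 * N * (N * S1%:Z).
    by ring.
  by rewrite eC eA eB /X /C /R /N; ring.
have lhs_ge0 : 0 <= 12 * N ^+ 2 * (E%:Z + S2%:Z - 2 * S1%:Z).
  by rewrite !mulr_ge0 ?sqr_ge0 // subr_ge0; lia.
have dA_ge0 : 0 <= 4 * N ^+ 3 * dA%:Z by rewrite !mulr_ge0 ?exprn_ge0.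
have v2_ge0 : 0 <= v%:Z ^+ 2 by rewrite exprn_ge0.
have v3_ge0 : 0 <= v%:Z ^+ 3 by rewrite exprn_ge0.
move: lhs_ge0 dA_ge0 (sqr_ge0 X) v2_ge0 v3_ge0; rewrite key.
move: (X ^+ 2) (4 * N ^+ 3 * dA%:Z) (v%:Z ^+ 2) (v%:Z ^+ 3); clear; lia.
Qed.

Section NoPDS.
Variables (gT : finGroupType) (G : {group gT}) (n r : nat) (D : {set gT}).
Hypotheses (cG : abelian G) (oG : #|G| = (9 * n ^ 2)%N) (co3n : coprime 3 n)
  (hnr : (2 * r + 5 = 3 * n)%N) (sDG : D \subset G)
  (hk : #|D| = (r * (3 * n + 1))%N)
  (hl : forall x, x \in D -> x != 1%g ->
     (pds_count D x)%:Z = - (3 * n)%:Z + (r ^ 2)%:Z + (3 * r)%:Z)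
  (hm : forall x, x \in G :\: D -> x != 1%g ->
     (pds_count D x)%:Z = ((r ^ 2 + r)%N)%:Z).

Let lamE : ((- (3 * n)%:Z + (r ^ 2)%:Z + (3 * r)%:Z)%:~R : algC) =
  r%:R ^+ 2 + 3%:R * r%:R - 3%:R * n%:R.
Proof. by rewrite !intrD intrN -!pmulrn natrX !natrM; ring. Qed.

Let muE : (((r ^ 2 + r)%N)%:Z%:~R : algC) = r%:R ^+ 2 + r%:R.
Proof. by rewrite -pmulrn natrD natrX. Qed.

(* Otherwise the trivial character is off by lam - mu = 2r - 3n = -5. *)
Lemma one_notin_D : 1%g \notin D.
Proof.
apply/negP => D1.
have := pds_char_norm (f := fun=> 1) sDG hl hm erefl
  (fun _ _ _ _ => esym (mulr1 1)) (fun _ _ => esym (rmorph1 _)).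
rewrite /= !sumr_const D1 /= subr0 oG hk rmorph_nat lamE muE => /eqP.
have [v nE rE] : exists2 v, n = (2 * v + 3)%N & r = (3 * v + 2)%N.
  by exists ((n - 3) %/ 2)%N; lia.
rewrite -subr_eq0 nE rE !(natrD, natrM, natrX) => /eqP E.
have : - 5%:R = 0 :> algC by rewrite -E; ring.
by move/eqP; rewrite oppr_eq0 pnatr_eq0.
Qed.

Let n_gt0 : (0 < n)%N.
Proof. by rewrite lt0n; apply: contraTneq co3n => ->. Qed.

Let co9 : coprime 9 (n ^ 2).
Proof. by rewrite (_ : 9 = 3 ^ 2)%N // coprime_pexpl // coprime_pexpr. Qed.

Local Notation A := (Ldiv_group cG 9).
Local Notation B := (Ldiv_group cG (n ^ 2)).
Local Notation phi := (@split_char gT G 9 (n ^ 2) cG).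
Local Notation tau := (r%:R - (3 * n)%:R : algC).

Definition chiD i j := \sum_(g in D) phi i j g.

Lemma chiD_eigen i j : (i != 0) || (j != 0) -> chiD i j = r%:R \/ chiD i j = tau.
Proof.
move=> nz; apply: conj_quadratic_root; rewrite ?rmorphB ?rmorph_nat //.
  have -> : r%:R + tau = - 5%:R by rewrite -hnr natrD natrM; ring.
  by rewrite oppr_eq0 pnatr_eq0.
have := pds_char_norm sDG hl hm (split_char1 i j) (split_charM oG co9 i j)
  (split_charV oG co9 i j).
rewrite sum_split_char_eq0 // (negbTE one_notin_D) /= hk lamE muE -/(chiD i j).
by move=> ->; rewrite natrM natrD natrM; ring.
Qed.

Let cA : abelian A := abelianS (Ldiv_group_sub cG 9) cG.
Let cB : abelian B := abelianS (Ldiv_group_sub cG (n ^ 2)) cG.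

Definition chiDB j := \sum_(g in D | g \in B) 'chi[B]_j g.
Definition ntau j := #|[set i | chiD i j == tau]|.

Lemma chiD_val i j :
  (i != 0) || (j != 0) -> chiD i j = r%:R - (3 * n)%:R *+ (chiD i j == tau).
Proof.
move=> nz; case: (chiD_eigen nz) => ->; last by rewrite eqxx.
suff /negbTE-> : r%:R != tau by rewrite subr0.
by rewrite -subr_eq0 opprB addrC subrK pnatr_eq0 muln_eq0 -lt0n n_gt0.
Qed.

Lemma sum_chiD_A j : \sum_i chiD i j = 9%:R * chiDB j.
Proof.
rewrite /chiD exchange_big /= /chiDB big_mkcondr mulr_sumr /=.
apply: eq_bigr => g Dg; rewrite sum_split_charA ?(subsetP sDG) //.
by case: (g \in B); rewrite ?mulr0 ?mul0r.
Qed.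

Lemma chiDB_int j : j != 0 -> chiDB j \is a Num.int.
Proof.
move=> nj; apply: Cint_rat_Aint.
  have -> : chiDB j = (\sum_i chiD i j) / 9%:R.
    by rewrite sum_chiD_A [9%:R * _]mulrC mulfK ?pnatr_eq0.
  apply: rpred_div (rpred_nat _ _); apply: rpred_sum => i _.
  by rewrite chiD_val ?nj ?orbT // rpredB ?rpredMn ?rpred_nat.
apply: rpred_sum => g /andP[_ Bg]; apply: (@Aint_unity_root (n ^ 2)).
  by rewrite expn_gt0 n_gt0.
rewrite unity_rootE; apply/eqP/irrX_abelian => //.
by move: Bg; rewrite mem_Ldiv_group => /andP[_ /eqP].
Qed.

Lemma chiDB_val j :
  j != 0 -> (3 %| ntau j)%N /\ chiDB j = r%:R - n%:R * (ntau j %/ 3)%:R.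
Proof.
move=> nj.
have sum9 : 9%:R * chiDB j = (9 * r)%:R - (3 * n * ntau j)%:R.
  rewrite -sum_chiD_A (eq_bigr _ (fun i _ => chiD_val (i := i) (j := j) _));
    last by move=> i _; rewrite nj orbT.
  rewrite sumrB sumr_const card_Iirr_abelian // (card_Ldiv_groupl cG oG co9).
  rewrite sumrMnr.
  have -> : (\sum_i (chiD i j == tau : nat))%N = ntau j.
    rewrite /ntau -sum1dep_card [RHS]big_mkcond.
    by apply: eq_bigr => i _; case: (_ == _).
  by rewrite !natrM; ring.
(* 9 chiDB j = 9r - 3n ntau j with chiDB j integral, and 3 is prime to n. *)
have [y yE] := intrP (chiDB_int nj).
have e9 : (9 * y = 9 * r%:Z - 3 * n%:Z * (ntau j)%:Z)%R.
  by apply: (@intr_inj algC); rewrite !(intrM, intrB) -yE -!pmulrn sum9 !natrM.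
have d3 : (3 %| ntau j)%N.
  by rewrite -(Gauss_dvdr _ co3n); apply/dvdnP; exists `|r%:Z - y|%N; lia.
split=> //; rewrite yE; have /dvdnP[J MJ] := d3; rewrite MJ mulnK //.
have -> : y = r%:Z - n%:Z * J%:Z by move: e9; rewrite MJ PoszM; lia.
by rewrite intrB intrM -!pmulrn.
Qed.

Lemma chiD_conjC i j : j != 0 -> chiD (conjC_Iirr i) j = chiD i j.
Proof.
move=> nj; have [u uE] := split_char_aut cG oG co9.
have uchiD : u (chiD i j) = chiD i j.
  have nz : (i != 0) || (j != 0) by rewrite nj orbT.
  case: (chiD_eigen nz) => ->; first by rewrite rmorph_nat.
  by rewrite rmorphB !rmorph_nat.
rewrite -[RHS]uchiD rmorph_sum; apply: eq_bigr => g Dg.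
by rewrite uE ?(subsetP sDG).
Qed.

(* The automorphism of split_char_aut pairs the i with chiD i j = tau, and
   only i = 0 is unpaired since A has odd order. *)
Lemma odd_ntau j : j != 0 -> odd (ntau j) = (chiD 0 j == tau).
Proof.
move=> nj.
have tauC i : (chiD (conjC_Iirr i) j == tau) = (chiD i j == tau).
  by rewrite chiD_conjC.
have even := card_nonfixed_even (@conjC_IirrK _ A) tauC.
have -> : ntau j = ((chiD 0%R j == tau)
                    + #|[set i | chiD i j == tau & conjC_Iirr i != i]|)%N.
  rewrite /ntau (cardsD1 0) inE; congr (_ + _)%N; apply: eq_card => i.
  rewrite !inE andbC; congr (_ && _).
  apply/idP/idP => [i0|]; last by apply: contra => /eqP->; rewrite conjC_Iirr0.
  apply: contra i0 => /eqP/conjC_Iirr_fixed_abelian-> //.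
  by rewrite (card_Ldiv_groupl cG oG co9).
by rewrite oddD (negbTE even) addbF oddb.
Qed.

Lemma ntau_div3_bound j : j != 0 ->
  (2 * (ntau j %/ 3) <= (chiD 0%R j == tau) + (ntau j %/ 3) ^ 2)%N.
Proof.
move=> nj; have [/dvdnP[J MJ] _] := chiDB_val nj.
have := odd_ntau nj; rewrite MJ mulnK // oddM andbT.
case: (chiD 0 j == tau) => [_|]; first by nia.
by case: J {MJ} => [|[|J]] //= _; nia.
Qed.

Lemma chiD00 : chiD 0 0 = (r * (3 * n + 1))%:R.
Proof.
rewrite /chiD (eq_bigr (fun=> 1)) ?sumr_const ?hk // => g Dg.
by rewrite split_char00 ?(subsetP sDG).
Qed.

Lemma chiDB0 : chiDB 0 = #|D :&: B|%:R.
Proof.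
rewrite /chiDB (eq_bigr (fun=> 1)) => [|g /andP[_ Bg]]; last first.
  by rewrite irr0 cfun1E Bg.
by rewrite sumr_const; congr (_%:R); apply: eq_card => g; rewrite inE.
Qed.

Lemma sum_chiD0_B : \sum_j chiD 0 j = (n ^ 2 * #|D :&: A|)%:R.
Proof.
rewrite /chiD exchange_big /= (eq_bigr (fun g => (n ^ 2)%:R *+ (g \in A)));
  last by move=> g Dg; rewrite sum_split_charB ?(subsetP sDG).
rewrite (eq_bigr _ (fun g _ => mulrb _ _)) -big_mkcondr sumr_const.
rewrite natrM mulr_natr.
by congr (_ *+ _); apply: eq_card => g; rewrite inE.
Qed.

Lemma sum_chiDB : \sum_j chiDB j = 0.
Proof.
rewrite /chiDB exchange_big /=; apply: big1 => g /andP[Dg Bg].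
transitivity ((#|B|%:R : algC) *+ (g == 1%g)).
  exact: (sum_irr_abelian cB Bg).
case: eqP => [g1|]; last by rewrite mulr0n.
by move: Dg (one_notin_D); rewrite g1 => ->.
Qed.

Lemma sum_chiDB_norm : \sum_j chiDB j * (chiDB j)^* = (n ^ 2 * #|D :&: B|)%:R.
Proof.
rewrite /chiDB (eq_bigr (fun j => \sum_(g in D | g \in B) \sum_(h in D | h \in B)
            'chi[B]_j g * ('chi_j h)^*)); last first.
  move=> j _; rewrite rmorph_sum mulr_suml; apply: eq_bigr => g _.
  by rewrite mulr_sumr.
rewrite exchange_big /= (eq_bigr (fun=> (n ^ 2)%:R)) => [|g /andP[Dg Bg]].
  rewrite sumr_const natrM mulr_natr; congr (_ *+ _).
  by apply: eq_card => g; rewrite inE.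
rewrite exchange_big /= (bigD1 g) /=; last by rewrite Dg.
rewrite (sum_irr_conj_abelian cB Bg Bg) eqxx (card_Ldiv_groupr cG oG co9).
rewrite big1 ?addr0 // => h /andP[/andP[Dh Bh] hg].
by rewrite (sum_irr_conj_abelian cB Bg Bh) eq_sym (negbTE hg).
Qed.

Lemma card_Iirr_nonzero : (#|[pred j : Iirr B | j != 0%R]| + 1 = n ^ 2)%N.
Proof.
rewrite (cardC1 (0 : Iirr B)) addn1 prednK ?card_Iirr_abelian //.
exact: (card_Ldiv_groupr cG oG co9).
Qed.

Lemma no_pds : False.
Proof.
pose e j := (chiD 0 j == tau : nat); pose J j := (ntau j %/ 3)%N.
pose c := #|[pred j : Iirr B | j != 0%R]|.
pose E := (\sum_(j | j != 0%R) e j)%N; pose S1 := (\sum_(j | j != 0%R) J j)%N.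
pose S2 := (\sum_(j | j != 0%R) J j ^ 2)%N.
apply: (@moment_equations_infeasible n r c #|D :&: A| #|D :&: B| E S1 S2 hnr
  card_Iirr_nonzero).
- have := sum_chiD0_B; rewrite (bigD1 0) //= chiD00.
  rewrite (eq_bigr (fun j => r%:R - (3 * n)%:R *+ e j)) => [|j nj]; last first.
    by rewrite -chiD_val ?nj ?orbT.
  rewrite sumrB sumr_const sumrMnr -/c -/E => h.
  apply/eqP; rewrite -(eqr_nat algC) natrD (natrD _ (n ^ 2 * _)%N) -h; apply/eqP.
  by rewrite !natrM; ring.
- have := sum_chiDB; rewrite (bigD1 0) //= chiDB0.
  rewrite (eq_bigr (fun j => r%:R - n%:R * (J j)%:R)) => [|j nj]; last first.
    by have [_ ->] := chiDB_val nj.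
  rewrite sumrB sumr_const -mulr_sumr -natr_sum -/c -/S1 => h.
  apply/eqP; rewrite -(eqr_nat algC) -subr_eq0 -h; apply/eqP.
  by rewrite !natrD !natrM; ring.
- have := sum_chiDB_norm; rewrite (bigD1 0) //= chiDB0 rmorph_nat.
  rewrite (eq_bigr (fun j => r%:R ^+ 2 + n%:R ^+ 2 * (J j ^ 2)%:R
                              - 2%:R * r%:R * n%:R * (J j)%:R)) => [|j nj].
    rewrite sumrB big_split /= sumr_const -!mulr_sumr -!natr_sum.
    rewrite -/c -/S1 -/S2 => h.
    apply/eqP; rewrite -(eqr_nat algC) (natrD _ (n ^ 2 * _)%N) -h; apply/eqP.
    by rewrite !natrD !natrX !natrM; ring.
  have [_ ->] := chiDB_val nj.
  by rewrite rmorphB rmorphM /= !rmorph_nat natrX; ring.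
rewrite /E /S1 /S2 big_distrr -big_split /=.
by apply: leq_sum => j nj; apply: ntau_div3_bound.
Qed.

End NoPDS.

Theorem theorem6 (gT : finGroupType) (G : {group gT}) (p s : nat) :
  abelian G -> prime p -> (5 <= p)%N -> (0 < s)%N ->
  #|G| = (9 * p ^ (4 * s))%N ->
  ~ exists D : {set gT},
      is_pds G D (9 * p ^ (4 * s))
        ((3 * p ^ (2 * s) - 5) %/ 2 * (3 * p ^ (2 * s) + 1))
        (- (3 * p ^ (2 * s))%:Z + (((3 * p ^ (2 * s) - 5) %/ 2) ^ 2)%:Z
           + (3 * ((3 * p ^ (2 * s) - 5) %/ 2))%:Z)
        ((((3 * p ^ (2 * s) - 5) %/ 2) ^ 2 + (3 * p ^ (2 * s) - 5) %/ 2)%:Z).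
Proof.
move=> cG p_pr p_ge5 s_gt0 oG [D [sDG _ hk hl hm]].
have sq : (p ^ (4 * s) = (p ^ (2 * s)) ^ 2)%N by rewrite -expnM mulnAC.
move: oG hk hl hm; rewrite sq.
set n := (p ^ (2 * s))%N; set r := ((3 * n - 5) %/ 2)%N => oG hk hl hm.
have co3n : coprime 3 n.
  rewrite coprimeXr // prime_coprime // dvdn_prime2 //.
  by apply: contraTneq p_ge5 => <-.
have hnr : (2 * r + 5 = 3 * n)%N.
  have p_odd : odd p by case: (even_prime p_pr) p_ge5 => [->|].
  have n_odd : odd n by rewrite oddX p_odd orbT.
  have n_ge5 : (5 <= n)%N.
    have : (p ^ 1 <= n)%N by rewrite /n leq_pexp2l ?(prime_gt0 p_pr); lia.
    by rewrite expn1; apply: leq_trans.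
  rewrite /r -(odd_double_half n) n_odd in n_ge5 *; lia.
exact: (no_pds cG oG co3n hnr sDG hk hl hm).
Qed.
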